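(* For every integer $k\ge 2$, no online algorithm achieves a competitive ratio better than $\frac76$ for the ATWC dispersion problem for arbitrary $k$-dimensional polytopes; that is, there is no online algorithm that is $\sigma$-competitive with $\sigma<\frac76$ for every $k$-dimensional polytope $P$.
   Context: Let $P\subset\mathbb{R}^k$ be a $k$-dimensional polytope with boundary $\partial P$; distances are Euclidean. An instance is a sequence $S=((s_1,d_1),\dots,(s_n,d_n))$ with $s_i<d_i$, $0=s_1\le\dots\le s_n$; point $i$ is present at time $t$ iff $s_i\le t\le d_i$; $T=\max_i d_i$. For locations $X=(X_1,\dots,X_n)\in P^n$, $d_{min}(t;X)=\min\{dis(X_i,\partial P),dis(X_i,X_j)\}$ over present points $i\ne j$ at time $t$, and $OPT_A(S;P)=\max_X\min_{t\le T}d_{min}(t;X)$. In the online ATWC problem, when point $i$ arrives the algorithm must irrevocably choose $X_i\in P$ knowing only past events (not future events nor $n$); an adaptive adversary who knows the algorithm chooses the events. An online algorithm is $\sigma$-competitive for $P$ if for every instance $S$, $OPT_A(S;P)\le\sigma\cdot\min_{t\le T}d_{min}(t;X)$ for its output $X$. *)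

From HB Require Import structures.
From mathcomp Require Import all_boot all_order all_algebra.
From mathcomp Require Import all_classical all_reals all_analysis.
Import numFieldNormedType.Exports.
Set Implicit Arguments. Unset Strict Implicit. Unset Printing Implicit Defensive.
Import Order.TTheory GRing.Theory Num.Theory.
Local Open Scope classical_set_scope.
Local Open Scope ring_scope.

Section ATWC.
Variables (R : realType) (k : nat).

Definition eucl (x y : 'rV[R]_k) : R :=
  Num.sqrt (\sum_(i < k) (x ord0 i - y ord0 i) ^+ 2).

Definition boundary (P : set 'rV[R]_k) : set 'rV[R]_k :=
  closure P `\` interior P.

Definition dis_bd (P : set 'rV[R]_k) (x : 'rV[R]_k) : R :=
  inf [set eucl x y | y in boundary P].

(* P is a k-dimensional polytope in R^k: the convex hull of finitely many
   points v_0..v_{m-1} whose affine hull is all of R^k. *)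
Definition kpolytope (P : set 'rV[R]_k) : Prop :=
  exists (m : nat) (v : 'I_m -> 'rV[R]_k),
    P = [set x | exists w : 'I_m -> R,
                   (forall j, 0 <= w j) /\ \sum_(j < m) w j = 1 /\
                   x = \sum_(j < m) w j *: v j]
    /\ (forall x : 'rV[R]_k, exists w : 'I_m -> R,
          \sum_(j < m) w j = 1 /\ x = \sum_(j < m) w j *: v j).

(* An instance: the sequence of pairs (s_i, d_i), indexed from 0. *)
Definition sT (S : seq (R * R)) (i : nat) : R := (nth (0, 0) S i).1.
Definition dT (S : seq (R * R)) (i : nat) : R := (nth (0, 0) S i).2.

Definition valid_instance (S : seq (R * R)) : Prop :=
  (0 < size S)%N /\ sT S 0 = 0 /\
  (forall i, (i < size S)%N -> sT S i < dT S i) /\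
  (forall i j, (i <= j)%N -> (j < size S)%N -> sT S i <= sT S j).

Definition present (S : seq (R * R)) (t : R) (i : nat) : Prop :=
  (i < size S)%N /\ sT S i <= t /\ t <= dT S i.

Definition horizon (S : seq (R * R)) : R := \big[Num.max/0]_(p <- S) p.2.

(* d_min(t; X), as an extended real (+oo if no point is present). *)
Definition dmin (P : set 'rV[R]_k) (S : seq (R * R)) (X : nat -> 'rV[R]_k)
    (t : R) : \bar R :=
  ereal_inf ([set (dis_bd P (X i))%:E | i in present S t] `|`
             [set e | exists i j, present S t i /\ present S t j /\ i <> j /\
                                  e = (eucl (X i) (X j))%:E]).

Definition value (P : set 'rV[R]_k) (S : seq (R * R)) (X : nat -> 'rV[R]_k)
    : \bar R :=
  ereal_inf [set dmin P S X t | t in [set t : R | t <= horizon S]].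

Definition OPT (P : set 'rV[R]_k) (S : seq (R * R)) : \bar R :=
  ereal_sup [set value P S X | X in
     [set X : nat -> 'rV[R]_k | forall i, (i < size S)%N -> P (X i)]].

(* What is known when point i arrives: the arrival times of earlier points,
   and the departure times of those earlier points that have already
   departed (d_j < s_i); plus the arrival time s_i itself. *)
Definition history (S : seq (R * R)) (i : nat) : seq (R * option R) :=
  [seq (p.1, if p.2 < sT S i then Some p.2 else None) | p <- take i S].

(* A deterministic online algorithm (for a fixed polytope): maps the known
   past and the current arrival time to a location. It does not know n. *)
Definition online_alg := seq (R * option R) -> R -> 'rV[R]_k.

Definition output (A : online_alg) (S : seq (R * R)) (i : nat) : 'rV[R]_k :=
  A (history S i) (sT S i).

Definition competitive (P : set 'rV[R]_k) (A : online_alg) (sigma : R) : Prop :=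
  forall S, valid_instance S ->
    (forall i, (i < size S)%N -> P (output A S i)) /\
    (OPT P S <= sigma%:E * value P S (output A S))%E.

End ATWC.

From HB Require Import structures.
From mathcomp Require Import all_boot all_order all_algebra.
From mathcomp Require Import all_classical all_reals all_analysis.
From mathcomp Require Import ring lra zify.
Import numFieldNormedType.Exports.
Set Implicit Arguments. Unset Strict Implicit. Unset Printing Implicit Defensive.
Import Order.TTheory GRing.Theory Num.Theory.
Local Open Scope classical_set_scope.
Local Open Scope ring_scope.

(* The adversary works in a polytope P squeezed between the balls of radii r and 1
   around the origin, where r < 1 is as close to 1 as we like.  A first point lives
   during [0, 1]: the optimum puts it at the centre and gets r, while the algorithm's
   point X1 is within 1 - |X1| of the boundary, so r <= sigma (1 - |X1|).  A second
   instance is indistinguishable from the first until time 1, when a second point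
   arrives: the optimum puts the two points at +-r/3 e_0 and gets 2r/3, while the new
   point X2 is within min (1 - |X2|, |X1| + |X2|) <= (1 + |X1|) / 2 of the boundary or
   of X1, so 2r/3 <= sigma (1 + |X1|) / 2.  Adding the two bounds eliminates |X1| and
   gives 7 r <= 6 sigma. *)

Section EuclideanNorm.
Variables (R : rcfType) (k : nat).
Implicit Types (x y : 'rV[R]_k) (a e : R).

Definition sqnorm x : R := \sum_(i < k) x ord0 i ^+ 2.
Definition enorm x : R := Num.sqrt (sqnorm x).
Definition dotr x y : R := \sum_(i < k) x ord0 i * y ord0 i.

Lemma sqnorm_ge0 x : 0 <= sqnorm x.
Proof. by apply: sumr_ge0 => i _; rewrite sqr_ge0. Qed.

Lemma enorm_ge0 x : 0 <= enorm x.
Proof. exact: sqrtr_ge0. Qed.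

Lemma sqr_enorm x : enorm x ^+ 2 = sqnorm x.
Proof. by rewrite sqr_sqrtr // sqnorm_ge0. Qed.

Lemma enorm_le1 x : (enorm x <= 1) = (sqnorm x <= 1).
Proof. by rewrite -sqr_enorm -[in RHS](expr1n _ 2) ler_sqr ?nnegrE ?enorm_ge0. Qed.

Lemma sqnorm0 : sqnorm (0 : 'rV[R]_k) = 0.
Proof. by rewrite /sqnorm big1 // => i _; rewrite mxE expr0n. Qed.

Lemma enorm0 : enorm (0 : 'rV[R]_k) = 0.
Proof. by rewrite /enorm sqnorm0 sqrtr0. Qed.

Lemma sqnormZ a x : sqnorm (a *: x) = a ^+ 2 * sqnorm x.
Proof. by rewrite /sqnorm mulr_sumr; apply: eq_bigr => i _; rewrite mxE exprMn. Qed.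

Lemma enormZ a x : enorm (a *: x) = `|a| * enorm x.
Proof. by rewrite /enorm sqnormZ sqrtrM ?sqr_ge0 // sqrtr_sqr. Qed.

Lemma enormN x : enorm (- x) = enorm x.
Proof. by rewrite -scaleN1r enormZ normrN normr1 mul1r. Qed.

Lemma enorm_delta i : enorm (delta_mx ord0 i : 'rV[R]_k) = 1.
Proof.
rewrite /enorm /sqnorm (bigD1 i) //= big1 ?addr0 ?mxE ?eqxx ?expr1n ?sqrtr1 //.
by move=> j ji; rewrite mxE eqxx (negbTE ji) expr0n.
Qed.

Lemma sqr_coord_le_sqnorm x j : x ord0 j ^+ 2 <= sqnorm x.
Proof. by rewrite /sqnorm (bigD1 j) //= lerDl; apply: sumr_ge0 => ? _; rewrite sqr_ge0. Qed.

Lemma coord_le_enorm x j : `|x ord0 j| <= enorm x.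
Proof. by rewrite -sqrtr_sqr; apply: ler_wsqrtr; apply: sqr_coord_le_sqnorm. Qed.

Lemma enorm_eq0 x : (enorm x == 0) = (x == 0).
Proof.
apply/eqP/eqP => [x0|->]; last exact: enorm0.
apply/rowP => j; rewrite mxE; apply/eqP; rewrite -normr_le0 -x0.
exact: coord_le_enorm.
Qed.

Lemma sqnorm_le_coord x e : (forall j, `|x ord0 j| <= e) -> sqnorm x <= k%:R * e ^+ 2.
Proof.
move=> xe; rewrite /sqnorm -[k in k%:R]card_ord -sum1_card natr_sum mulr_suml.
apply: ler_sum => j _; rewrite mul1r -real_normK ?num_real //.
by apply: lerXn2r; rewrite ?nnegrE ?(le_trans _ (xe j)).
Qed.

Lemma sqnormD x y : sqnorm (x + y) = sqnorm x + 2 * dotr x y + sqnorm y.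
Proof.
by rewrite /sqnorm /dotr mulr_sumr -!big_split /=; apply: eq_bigr => i _; rewrite mxE; ring.
Qed.

Lemma dotr_le x y : dotr x y <= enorm x * enorm y.
Proof.
set a := enorm x; set b := enorm y.
have expand : \sum_(i < k) (b * x ord0 i - a * y ord0 i) ^+ 2 =
                2 * (a * b) * (a * b - dotr x y).
  transitivity (b ^+ 2 * sqnorm x - 2 * (a * b) * dotr x y + a ^+ 2 * sqnorm y).
    rewrite /sqnorm /dotr !mulr_sumr -sumrN -!big_split /=.
    by apply: eq_bigr => i _; ring.
  by rewrite -!sqr_enorm -/a -/b; ring.
have : 0 <= 2 * (a * b) * (a * b - dotr x y).
  by rewrite -expand; apply: sumr_ge0 => i _; rewrite sqr_ge0.
have [ab0|ab_gt0] := eqVneq (a * b) 0; last first.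
  have ab_pos : 0 < a * b by rewrite lt0r ab_gt0 mulr_ge0 ?enorm_ge0.
  by rewrite pmulr_rge0 ?subr_ge0 // mulr_gt0.
move=> _; rewrite ab0; move/eqP: ab0; rewrite mulf_eq0 !enorm_eq0.
by case/orP => /eqP ->; rewrite /dotr big1 // => i _; rewrite mxE ?mul0r ?mulr0.
Qed.

Lemma enormD x y : enorm (x + y) <= enorm x + enorm y.
Proof.
rewrite -ler_sqr ?nnegrE ?addr_ge0 ?enorm_ge0 // sqr_enorm sqnormD.
by have := dotr_le x y; rewrite -!sqr_enorm; lra.
Qed.

Lemma enormB_ge x y : enorm x - enorm y <= enorm (x - y).
Proof. by have := enormD (x - y) y; rewrite subrK; lra. Qed.

Lemma enormB_le x y : enorm (x - y) <= enorm x + enorm y.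
Proof. by rewrite -(enormN y); apply: enormD. Qed.

Lemma sqnorm_convex (I : finType) (w : I -> R) (v : I -> 'rV[R]_k) :
  (forall j, 0 <= w j) -> \sum_j w j = 1 ->
  sqnorm (\sum_j w j *: v j) <= \sum_j w j * sqnorm (v j).
Proof.
move=> w_ge0 w1; rewrite /sqnorm.
under eq_bigr => i _ do rewrite summxE.
under [X in _ <= X]eq_bigr => j _ do rewrite mulr_sumr.
rewrite exchange_big /=; apply: ler_sum => i _.
under eq_bigr => j _ do rewrite mxE.
have expand c : \sum_j w j * (v j ord0 i - c) ^+ 2 =
    \sum_j w j * v j ord0 i ^+ 2 - 2 * c * (\sum_j w j * v j ord0 i) + c ^+ 2 * \sum_j w j.
  by rewrite !mulr_sumr -sumrN -!big_split /=; apply: eq_bigr => j _; ring.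
set m := \sum_j w j * v j ord0 i.
have : 0 <= \sum_j w j * (v j ord0 i - m) ^+ 2.
  by apply: sumr_ge0 => j _; rewrite mulr_ge0 ?sqr_ge0.
by rewrite expand w1 -/m; lra.
Qed.

End EuclideanNorm.

Section ConvexHull.
Variables (R : numDomainType) (V : lmodType R).

Definition hull (I : finType) (v : I -> V) : set V :=
  [set x | exists w : I -> R,
     (forall i, 0 <= w i) /\ \sum_i w i = 1 /\ x = \sum_i w i *: v i].

Definition pushw (I J : finType) (f : J -> I) (w : J -> R) (i : I) : R :=
  \sum_(j | f j == i) w j.

Variables (I J : finType) (f : J -> I).

Lemma sum_pushw (w : J -> R) : \sum_i pushw f w i = \sum_j w j.
Proof. by rewrite (partition_big f predT). Qed.

Lemma combination_pushw (w : J -> R) (v : I -> V) :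
  \sum_i pushw f w i *: v i = \sum_j w j *: v (f j).
Proof.
rewrite (partition_big f predT) //; apply: eq_bigr => i _.
by rewrite scaler_suml; apply: eq_bigr => j /eqP <-.
Qed.

Lemma hull_comp (v : I -> V) : hull (v \o f) `<=` hull v.
Proof.
move=> _ [w [w_ge0 [w1 ->]]]; exists (pushw f w); split.
  by move=> i; apply: sumr_ge0 => j _.
by rewrite sum_pushw combination_pushw.
Qed.

End ConvexHull.

Lemma kpolytope_hull (R : realType) (k : nat) (I : finType) (v : I -> 'rV[R]_k) :
  (forall x, exists w : I -> R, \sum_i w i = 1 /\ x = \sum_i w i *: v i) ->
  kpolytope (hull v).
Proof.
move=> affine; exists #|I|, (v \o enum_val); split.
  apply/seteqP; split; last exact: hull_comp.
  rewrite -[X in hull X `<=` _](funext (fun i => congr1 v (enum_rankK i))).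
  exact: hull_comp.
move=> x; have [w [w1 ->]] := affine x.
exists (pushw enum_rank w); rewrite sum_pushw combination_pushw; split=> //.
by apply: eq_bigr => i _; rewrite /= enum_rankK.
Qed.

Section CornerSimplex.
Variables (R : rcfType) (k : nat).
Implicit Types (g d : 'rV[R]_k) (s : R) (o : 'I_k.+1).

Definition simplex_vertex g s o : 'rV[R]_k :=
  g + if unlift ord0 o is Some i then s *: delta_mx ord0 i else 0.

Definition simplex_weight s d o : R :=
  if unlift ord0 o is Some i then d ord0 i / s else 1 - \sum_i d ord0 i / s.

Lemma sum_simplex_weight s d : \sum_o simplex_weight s d o = 1.
Proof.
rewrite big_ord_recl /simplex_weight unlift_none.
by rewrite [X in _ + X](eq_bigr (fun i => d ord0 i / s)) ?subrK // => i _; rewrite liftK.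
Qed.

Lemma simplex_combination g s d : s != 0 ->
  \sum_o simplex_weight s d o *: simplex_vertex g s o = g + d.
Proof.
move=> s0; rewrite big_ord_recl /simplex_weight /simplex_vertex unlift_none addr0.
rewrite [X in _ + X](eq_bigr (fun i => (d ord0 i / s) *: g + d ord0 i *: delta_mx ord0 i));
  last first.
  by move=> i _; rewrite liftK scalerDr scalerA divfK.
rewrite big_split /= scalerBl scale1r scaler_suml -row_sum_delta.
by rewrite addrA subrK.
Qed.

Lemma enorm_simplex_vertex g s o : enorm (simplex_vertex g s o) <= enorm g + `|s|.
Proof.
rewrite /simplex_vertex; case: (unlift ord0 o) => [i|].
  by apply: le_trans (enormD _ _) _; rewrite enormZ enorm_delta mulr1.
by rewrite addr0 lerDl.
Qed.

End CornerSimplex.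

Section BallPolytope.
Variables (R : realType) (k M : nat).
Local Notation grid := {ffun 'I_k -> 'I_(2 * M).+1}.
Implicit Types (x d z : 'rV[R]_k) (f : grid).

Definition grid_point (f : grid) : 'rV[R]_k := \row_i (((f i)%:R - M%:R) / M%:R).

Definition mesh : R := k%:R / M%:R.

(* Corner simplices of the grid cells, with the vertices that leave the unit ball
   moved to the origin: the hull stays in the unit ball, and the simplices of cells
   near the inner ball are untouched. *)
Definition ball_vertex (t : grid * 'I_k.+1) : 'rV[R]_k :=
  let c := simplex_vertex (grid_point t.1) mesh t.2 in
  if enorm c <= 1 then c else 0.

Definition ball_polytope : set 'rV[R]_k := hull ball_vertex.

Lemma ball_polytope_sub z : ball_polytope z -> enorm z <= 1.
Proof.
move=> [w [w_ge0 [w1 ->]]]; rewrite enorm_le1.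
apply: le_trans (sqnorm_convex _ w_ge0 w1) _; rewrite -[leRHS]w1.
apply: ler_sum => t _; rewrite ler_piMr // -enorm_le1 /ball_vertex.
by case: ifP => // _; rewrite enorm0.
Qed.

Hypotheses (k_gt0 : (0 < k)%N) (M_gt0 : (0 < M)%N).

Lemma mesh_gt0 : 0 < mesh.
Proof. by rewrite divr_gt0 ?ltr0n. Qed.

Lemma ball_polytope_simplex f d :
  (forall o, enorm (simplex_vertex (grid_point f) mesh o) <= 1) ->
  (forall o, 0 <= simplex_weight mesh d o) ->
  ball_polytope (grid_point f + d).
Proof.
move=> corners w_ge0; apply: (@hull_comp _ _ _ _ (fun o => (f, o)) ball_vertex).
exists (simplex_weight mesh d); split=> //; split; first exact: sum_simplex_weight.
rewrite -(simplex_combination _ _ (lt0r_neq0 mesh_gt0)).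
by apply: eq_bigr => o _; rewrite /ball_vertex /= corners.
Qed.

Lemma grid_floor x : (forall i, `|x ord0 i| <= 1) ->
  exists f : grid, forall i, 0 <= x ord0 i - grid_point f ord0 i <= M%:R^-1.
Proof.
move=> x_le1; have M_pos : 0 < M%:R :> R by rewrite ltr0n.
pose y i := M%:R * x ord0 i + M%:R.
have y_bounds i : 0 <= y i <= 2 * M%:R.
  by have := x_le1 i; rewrite ler_norml /y => /andP[]; nra.
exists [ffun i => inord (Num.truncn (y i))] => i.
have [y_ge0 y_le] := andP (y_bounds i).
have trunc_le : (Num.truncn (y i) < (2 * M).+1)%N.
  by rewrite truncn_lt_nat // (le_lt_trans y_le) // -natrM ltr_nat.
have -> : x ord0 i - grid_point [ffun i => inord (Num.truncn (y i))] ord0 i =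
          (y i - (Num.truncn (y i))%:R) / M%:R.
  by rewrite mxE ffunE inordK // /y; field; rewrite gt_eqF.
rewrite divr_ge0 ?(ltW M_pos) ?subr_ge0 ?truncn_le //=.
by rewrite -[leRHS]mul1r ler_pM2r ?invr_gt0 //; have := truncnS_gt (y i); rewrite -natr1; lra.
Qed.

Lemma ball_polytope_ball x : enorm x <= 1 - 2 * mesh -> ball_polytope x.
Proof.
move=> x_small; have mesh_pos := mesh_gt0.
have k1 : 1 <= k%:R :> R by rewrite ler1n.
have M_pos : 0 < M%:R :> R by rewrite ltr0n.
have /grid_floor [f floor] : forall i, `|x ord0 i| <= 1.
  by move=> i; apply: le_trans (coord_le_enorm _ _) _; lra.
set d := x - grid_point f.
have d_coord i : 0 <= d ord0 i <= M%:R^-1 by have := floor i; rewrite /d !mxE.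
have d_small : enorm d <= mesh.
  rewrite -ler_sqr ?nnegrE ?enorm_ge0 ?(ltW mesh_pos) // sqr_enorm.
  apply: le_trans (sqnorm_le_coord (e := M%:R^-1) _) _.
    by move=> i; have /andP[d0 d1] := d_coord i; rewrite ger0_norm.
  by rewrite /mesh expr_div_n exprVn ler_pM2r ?invr_gt0 ?exprn_gt0 // expr2; nra.
rewrite -(subrK (grid_point f) x) addrC -/d; apply: ball_polytope_simplex.
  move=> o; apply: le_trans (enorm_simplex_vertex _ _ _) _.
  have : enorm (grid_point f) <= enorm x + enorm d.
    by rewrite -(enormN d) -[grid_point f](addrNK x) opprB addrC enormD.
  by rewrite ger0_norm ?(ltW mesh_pos); lra.
move=> o; rewrite /simplex_weight; case: (unlift ord0 o) => [i|].
  by have /andP[d0 _] := d_coord i; rewrite divr_ge0 ?(ltW mesh_pos).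
rewrite subr_ge0; apply: le_trans (ler_sum _ (fun i _ => _ : d ord0 i / mesh <= k%:R^-1)) _.
  move=> i _; have /andP[_ d1] := d_coord i.
  by rewrite ler_pdivrMr // /mesh mulrA mulVf ?mul1r // gt_eqF ?ltr0n.
by rewrite sumr_const card_ord -[leLHS]mulr_natr mulVf // gt_eqF ?ltr0n.
Qed.

Lemma kpolytope_ball_polytope : (k <= M)%N -> kpolytope ball_polytope.
Proof.
move=> kM; apply: kpolytope_hull => x.
pose f0 : grid := [ffun _ => inord M].
have f0_origin : grid_point f0 = 0.
  by apply/rowP => i; rewrite !mxE ffunE inordK ?subrr ?mul0r //; lia.
have corners o : ball_vertex (f0, o) = simplex_vertex (grid_point f0) mesh o.
  have mesh_le1 : mesh <= 1 by rewrite ler_pdivrMr ?ltr0n // mul1r ler_nat.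
  have : enorm (simplex_vertex (grid_point f0) mesh o) <= 1.
    apply: le_trans (enorm_simplex_vertex _ _ _) _.
    by rewrite f0_origin enorm0 add0r ger0_norm // ltW // mesh_gt0.
  by rewrite /ball_vertex /= => ->.
exists (pushw (fun o => (f0, o)) (simplex_weight mesh x)).
rewrite sum_pushw sum_simplex_weight combination_pushw; split=> //.
under eq_bigr => o _ do rewrite corners.
by rewrite simplex_combination ?f0_origin ?add0r // lt0r_neq0 // mesh_gt0.
Qed.

End BallPolytope.

Section Boundary.
Variables (R : realType) (k : nat).
Implicit Types (P : set 'rV[R]_k) (u x y z : 'rV[R]_k).
Hypothesis k_gt0 : (0 < k)%N.

Lemma ball_scale u (a b e : R) : enorm u <= 1 -> `|a - b| < e -> ball (a *: u) e (b *: u).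
Proof.
move=> u_le1 ab; split=> [|i j]; first exact: le_lt_trans ab.
rewrite /ball /= !mxE -mulrBl normrM (ord1 i).
by apply: le_lt_trans ab; rewrite ler_piMr // (le_trans (coord_le_enorm _ _)).
Qed.

Lemma interior_ball P r y :
  (forall z, enorm z <= r -> P z) -> enorm y < r -> interior P y.
Proof.
move=> ball_sub y_lt; have k_pos : 0 < k%:R :> R by rewrite ltr0n.
apply/nbhs_ballP; exists ((r - enorm y) / k%:R); first by rewrite /= divr_gt0 ?subr_gt0.
move=> z [_ zy]; apply: ball_sub.
have : sqnorm (z - y) <= (r - enorm y) ^+ 2.
  apply: le_trans (sqnorm_le_coord (e := (r - enorm y) / k%:R) _) _.
    by move=> j; have := zy ord0 j; rewrite /ball /= !mxE distrC => /ltW.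
  rewrite expr_div_n; set a := (r - enorm y) ^+ 2.
  have -> : k%:R * (a / k%:R ^+ 2) = a / k%:R by field; rewrite gt_eqF.
  by rewrite ler_pdivrMr // ler_peMr ?sqr_ge0 ?ler1n.
rewrite -sqr_enorm ler_sqr ?nnegrE ?enorm_ge0 ?subr_ge0 ?(ltW y_lt) // => zy_le.
by have := enormD (z - y) y; rewrite subrK; lra.
Qed.

Lemma boundary_enorm_ge P r y :
  (forall z, enorm z <= r -> P z) -> boundary P y -> r <= enorm y.
Proof.
move=> ball_sub [_ not_int]; rewrite leNgt; apply/negP => y_lt.
exact/not_int/(interior_ball ball_sub).
Qed.

Lemma exists_unit_dir x : exists u, enorm u = 1 /\ x = enorm x *: u.
Proof.
have [->|x0] := eqVneq x 0.
  by exists (delta_mx ord0 (Ordinal k_gt0)); rewrite enorm_delta enorm0 scale0r.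
have x_pos : 0 < enorm x by rewrite lt0r enorm_eq0 x0 enorm_ge0.
exists ((enorm x)^-1 *: x); rewrite enormZ ger0_norm ?invr_ge0 ?enorm_ge0 //.
by rewrite mulVf ?gt_eqF // scalerA mulfV ?gt_eqF // scale1r.
Qed.

Lemma exists_boundary_near P rho x :
  (forall z, P z -> enorm z <= rho) -> P x ->
  exists y, boundary P y /\ enorm (x - y) <= rho - enorm x.
Proof.
move=> P_sub Px; have [u [u1 xu]] := exists_unit_dir x.
pose E := [set t : R | 0 <= t /\ P (t *: u)].
have Ex : E (enorm x) by split; [exact: enorm_ge0 | rewrite -xu].
have E_le t : E t -> t <= rho.
  by move=> [t0 /P_sub]; rewrite enormZ u1 mulr1 ger0_norm.
have E_sup : has_sup E by split; [exists (enorm x) | exists rho => t /E_le].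
have le_sup t : E t -> t <= sup E by move=> Et; exact: sup_upper_bound.
have sup_le : sup E <= rho by apply: ge_sup; [exists (enorm x) | move=> t /E_le].
have x_le : enorm x <= sup E by exact: le_sup.
exists (sup E *: u); split; last first.
  by rewrite {1}xu -scalerBl enormZ u1 mulr1 ler0_norm ?subr_le0 //; lra.
split.
  move=> B /nbhs_ballP [e /= e_gt0 eB].
  have [t Et sup_lt] := sup_adherent e_gt0 E_sup.
  exists (t *: u); split; first by case: Et.
  apply/eB/ball_scale; rewrite ?u1 // ger0_norm ?subr_ge0 ?le_sup //; lra.
move=> /nbhs_ballP [e /= e_gt0 eB].
have : E (sup E + e / 2).
  split; first by have := enorm_ge0 x; lra.
  apply/eB/ball_scale; rewrite ?u1 // opprD addNKr normrN ger0_norm; lra.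
by move/le_sup; lra.
Qed.

End Boundary.

Section DispersionValue.
Variables (R : realType) (k : nat) (P : set 'rV[R]_k).
Implicit Types (x y : 'rV[R]_k) (S : seq (R * R)) (X : nat -> 'rV[R]_k).

Lemma euclE x y : eucl x y = enorm (x - y).
Proof.
by rewrite /eucl /enorm /sqnorm; congr Num.sqrt; apply: eq_bigr => i _; rewrite !mxE.
Qed.

Lemma dis_bd_ge0 x : 0 <= dis_bd P x.
Proof.
rewrite /dis_bd; have [[y Py]|no_bd] := pselect (exists y, boundary P y).
  by apply: lb_le_inf => [|_ [z _ <-]]; [exists (eucl x y), y | exact: sqrtr_ge0].
suff -> : [set eucl x y | y in boundary P] = set0 by rewrite inf0.
by apply/seteqP; split=> // e [z Pz _]; apply: no_bd; exists z.
Qed.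

Lemma dis_bd_le x y : boundary P y -> dis_bd P x <= eucl x y.
Proof.
move=> Py; apply: ge_inf; last by exists y.
by exists 0 => _ [z _ <-]; exact: sqrtr_ge0.
Qed.

Lemma dis_bd_ge x r : boundary P !=set0 ->
  (forall y, boundary P y -> r <= eucl x y) -> r <= dis_bd P x.
Proof.
move=> [y0 Py0] le_r; apply: lb_le_inf; first by exists (eucl x y0), y0.
by move=> _ [y Py <-]; apply: le_r.
Qed.

Local Open Scope ereal_scope.

Lemma value_le_dmin S X t : (t <= horizon S)%R -> value P S X <= dmin P S X t.
Proof. by move=> tT; apply: ereal_inf_lbound; exists t. Qed.

Lemma dmin_le_dis_bd S X t i : present S t i -> dmin P S X t <= (dis_bd P (X i))%:E.
Proof. by move=> pi; apply: ereal_inf_lbound; left; exists i. Qed.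

Lemma dmin_le_eucl S X t i j : present S t i -> present S t j -> i <> j ->
  dmin P S X t <= (eucl (X i) (X j))%:E.
Proof. by move=> pi pj ij; apply: ereal_inf_lbound; right; exists i, j. Qed.

Lemma value_ge S X (r : R) :
  (forall t i, present S t i -> (r <= dis_bd P (X i))%R) ->
  (forall t i j, present S t i -> present S t j -> i <> j -> (r <= eucl (X i) (X j))%R) ->
  r%:E <= value P S X.
Proof.
move=> r_dis r_eucl; apply: le_ereal_inf_tmp => _ [t _ <-].
apply: le_ereal_inf_tmp => _ [[i pi <-]|[i [j [pi [pj [ij ->]]]]]]; rewrite lee_fin.
  exact: r_dis pi.
exact: r_eucl pi pj ij.
Qed.

Lemma value_ge0 S X : 0 <= value P S X.
Proof. by apply: value_ge => *; [exact: dis_bd_ge0 | exact: sqrtr_ge0]. Qed.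

Lemma value_le_OPT S X : (forall i, (i < size S)%N -> P (X i)) -> value P S X <= OPT P S.
Proof. by move=> PX; apply: ereal_sup_ubound; exists X. Qed.

End DispersionValue.

Lemma competitive_ratio_le (R : realType) (V : \bar R) (a b sigma : R) : 0 < a ->
  (a%:E <= sigma%:E * V)%E -> (0 <= V)%E -> (V <= b%:E)%E -> a <= sigma * b.
Proof.
move=> a_gt0; case: V => [v| |] //=; rewrite -EFinM !lee_fin => a_le v_ge0 v_le.
have sigma_gt0 : 0 < sigma.
  by rewrite ltNge; apply/negP => sigma_le0; have := mulr_le0_ge0 sigma_le0 v_ge0; lra.
by apply: le_trans a_le _; rewrite ler_pM2l.
Qed.

Section TwoInstanceAdversary.
Variables (R : realType) (k : nat) (P : set 'rV[R]_k) (r sigma : R) (A : online_alg R k).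
Hypotheses (k_gt0 : (0 < k)%N) (r_gt0 : 0 < r).
Hypothesis P_sub : forall z, P z -> enorm z <= 1.
Hypothesis ball_sub : forall z, enorm z <= r -> P z.
Hypothesis A_comp : competitive P A sigma.

Definition lone_instance : seq (R * R) := [:: (0, 1)].
Definition pair_instance : seq (R * R) := [:: (0, 2); (1, 2)].

Lemma valid_lone_instance : valid_instance lone_instance.
Proof. by do !split=> //; [case=> // _; rewrite /sT /dT /=; lra | case=> [|?] [|?]]. Qed.

Lemma valid_pair_instance : valid_instance pair_instance.
Proof.
do !split=> //; first by case=> [|[|?]] // _; rewrite /sT /dT /=; lra.
by case=> [|[|?]] [|[|?]] //= _ _; rewrite /sT /=; lra.
Qed.

Let first_location := output A lone_instance 0.

(* Before time 1 the two instances have the same history. *)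
Lemma first_location_same : output A pair_instance 0 = first_location.
Proof. by []. Qed.

Lemma dis_bd_le_1B x : P x -> dis_bd P x <= 1 - enorm x.
Proof.
move=> Px; have [y [Py xy]] := exists_boundary_near k_gt0 P_sub Px.
by apply: le_trans (dis_bd_le x Py) _; rewrite euclE.
Qed.

Lemma dis_bd_ge_rB x : r - enorm x <= dis_bd P x.
Proof.
have P0 : P 0 by apply: ball_sub; rewrite enorm0 ltW.
apply: dis_bd_ge => [|y Py].
  by have [y [Py _]] := exists_boundary_near k_gt0 P_sub P0; exists y.
rewrite euclE -[x - y]opprB enormN; apply: le_trans (enormB_ge _ _).
by have := boundary_enorm_ge k_gt0 ball_sub Py; lra.
Qed.

Lemma lone_instance_bound : r <= sigma * (1 - enorm first_location).
Proof.
have [A_in A_opt] := A_comp valid_lone_instance.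
have value_ge0_A := value_ge0 P lone_instance (output A lone_instance).
apply: (competitive_ratio_le r_gt0 _ value_ge0_A); last first.
  apply: le_trans (value_le_dmin P _ (t := 0) _) _.
    by rewrite /horizon big_cons big_nil /= le_max ler01.
  apply: le_trans (dmin_le_dis_bd P _ (i := 0) _) _.
    by split=> //; rewrite /sT /dT /=; lra.
  by rewrite lee_fin dis_bd_le_1B //; exact: A_in 0%N isT.
apply: le_trans A_opt; apply: le_trans (value_le_OPT (X := fun _ => 0) _); last first.
  by move=> i _; apply: ball_sub; rewrite enorm0 ltW.
apply: value_ge => [t i _|t i j [i_lt _] [j_lt _] ij].
  by apply: le_trans (dis_bd_ge_rB 0); rewrite enorm0 subr0.
by case: i j i_lt j_lt ij => [|?] [|?].
Qed.

Lemma pair_instance_bound : 2 * r / 3 <= sigma * ((1 + enorm first_location) / 2).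
Proof.
have [A_in A_opt] := A_comp valid_pair_instance.
set X2 := output A pair_instance 1.
have r_pos : 0 < 2 * r / 3 by rewrite divr_gt0 ?mulr_gt0.
have value_ge0_A := value_ge0 P pair_instance (output A pair_instance).
apply: (competitive_ratio_le r_pos _ value_ge0_A); last first.
  have p0 : present pair_instance 1 0 by split=> //; rewrite /sT /dT /=; lra.
  have p1 : present pair_instance 1 1 by split=> //; rewrite /sT /dT /=; lra.
  apply: le_trans (value_le_dmin P _ (t := 1) _) _.
    by rewrite /horizon !big_cons big_nil /= !le_max; apply/orP; left; lra.
  apply: le_trans (_ : _ <= (Num.min (dis_bd P X2) (eucl first_location X2))%:E)%E _.
    rewrite EFin_min le_min (dmin_le_dis_bd _ _ p1) -first_location_same.
    by rewrite (dmin_le_eucl _ _ p0 p1).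
  have := enormB_le first_location X2; have := dis_bd_le_1B (A_in 1%N isT).
  rewrite lee_fin euclE ge_min -/X2 => dis_le eucl_le.
  by case: lerP => //= dis_gt; lra.
pose u : 'rV[R]_k := (r / 3) *: delta_mx ord0 (Ordinal k_gt0).
have u_norm : enorm u = r / 3.
  by rewrite enormZ enorm_delta mulr1 ger0_norm // divr_ge0 // ltW.
pose Y i : 'rV[R]_k := if i == 0%N then u else - u.
have Y_norm i : enorm (Y i) = r / 3 by rewrite /Y; case: ifP; rewrite ?enormN u_norm.
apply: le_trans A_opt; apply: le_trans (value_le_OPT (X := Y) _); last first.
  by move=> i _; apply: ball_sub; rewrite Y_norm; lra.
apply: value_ge => [t i _|t i j [i_lt _] [j_lt _] ij].
  by apply: le_trans (dis_bd_ge_rB (Y i)); rewrite Y_norm; lra.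
have uu : enorm (u + u) = 2 * r / 3.
  by rewrite -mulr2n -scaler_nat enormZ u_norm normr_nat mulrA.
rewrite euclE /Y; case: i i_lt ij => [|[|//]] _; case: j j_lt => [|[|//]] _ ij //=.
  by rewrite opprK uu.
by rewrite -opprD enormN uu.
Qed.

Lemma competitive_ratio_ge : 7 * r <= 6 * sigma.
Proof. by have := lone_instance_bound; have := pair_instance_bound; nra. Qed.

End TwoInstanceAdversary.

Lemma exists_ball_polytope (R : realType) (k : nat) (r : R) :
  (0 < k)%N -> 0 <= r -> r < 1 ->
  exists P : set 'rV[R]_k, [/\ kpolytope P, (forall z, P z -> enorm z <= 1)
                            & (forall z, enorm z <= r -> P z)].
Proof.
move=> k_gt0 r_ge0 r_lt1.
pose M := (Num.truncn (2 * k%:R / (1 - r))).+1.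
have M_pos : 0 < M%:R :> R by rewrite ltr0n.
have M_large : 2 * k%:R < (1 - r) * M%:R.
  by rewrite [_ * M%:R]mulrC -ltr_pdivrMr ?subr_gt0 //; exact: truncnS_gt.
have mesh_lt : 2 * mesh R k M < 1 - r by rewrite /mesh mulrA ltr_pdivrMr.
have kM : (k <= M)%N by rewrite -(ler_nat R); have := ler0n R k; nra.
exists (@ball_polytope R k M); split.
- exact: kpolytope_ball_polytope.
- exact: ball_polytope_sub.
- by move=> z z_le; apply: ball_polytope_ball => //; lra.
Qed.

Theorem theorem6 (R : realType) (k : nat) (hk : (2 <= k)%N)
    (sigma : R) (hsigma : sigma < 7%:R / 6%:R) :
  ~ exists A : set 'rV[R]_k -> online_alg R k,
      forall P : set 'rV[R]_k, kpolytope P -> competitive P (A P) sigma.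
Proof.
move=> [A A_comp]; have k_gt0 : (0 < k)%N by lia.
pose r := Num.max 2^-1 ((1 + sigma * 6 / 7) / 2).
have [r_half r_sigma] : 2^-1 <= r /\ (1 + sigma * 6 / 7) / 2 <= r.
  by split; rewrite le_max lexx ?orbT.
have r_gt0 : 0 < r by apply: lt_le_trans r_half; rewrite invr_gt0.
have r_lt1 : r < 1 by rewrite gt_max; apply/andP; split; lra.
have [P [P_poly P_sub ball_sub]] := exists_ball_polytope k_gt0 (ltW r_gt0) r_lt1.
have := competitive_ratio_ge k_gt0 r_gt0 P_sub ball_sub (A_comp P P_poly).
lra.
Qed.
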